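(* Let $\mathcal{X}$ be a finite set, $\pi$ a probability distribution on $\mathcal{X}$ with $\pi(x)>0$ for all $x$, $p>1$, $\alpha>0$, and $\mathcal{N}$ a symmetric neighborhood mapping on $\mathcal{X}$ (with $x\notin\mathcal{N}(x)$) such that $\max_{x}|\mathcal{N}(x)|\le p^\alpha$. Suppose there exist $x^*\in\mathcal{X}$, an operator $\mathsf{T}\colon\mathcal{X}\to\mathcal{X}$ and a constant $\nu>\alpha$ such that $\mathsf{T}(x^* )=x^*$ and for every $x\neq x^*$, $\mathsf{T}(x)\in\mathcal{N}(x)$ and $\pi(\mathsf{T}(x))\ge p^\nu\pi(x)$ (Assumption 1). Then for any transition matrix $P$ on $\mathcal{X}$ that is irreducible and reversible with respect to $\pi$, $$\mathrm{Gap}(P)\ge\kappa(p,\alpha,\nu)\min_{x\neq x^*}P(x,\mathsf{T}(x)),\qquad \kappa(p,\alpha,\nu)=\tfrac12\{1-p^{-(\nu-\alpha)/2}\}^3,$$ and for any transition rate matrix $Q$ on $\mathcal{X}$ that is irreducible and reversible with respect to $\pi$, $\mathrm{Gap}(Q)\ge\kappa(p,\alpha,\nu)\min_{x\neq x^*}Q(x,\mathsf{T}(x))$.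
   Context: For an irreducible reversible transition matrix $P$ with eigenvalues $1=\lambda_1(P)>\lambda_2(P)\ge\cdots$, $\mathrm{Gap}(P)=1-\lambda_2(P)$. For an irreducible reversible transition rate matrix $Q$ with eigenvalues $0=\lambda_1(Q)>\lambda_2(Q)\ge\cdots$, $\mathrm{Gap}(Q)=-\lambda_2(Q)$. *)

From HB Require Import structures.
From mathcomp Require Import all_boot all_order all_algebra.
From mathcomp Require Import all_classical all_reals.
From mathcomp Require Import topology normedtype sequences exp.
Set Implicit Arguments. Unset Strict Implicit. Unset Printing Implicit Defensive.
Import Order.TTheory GRing.Theory Num.Theory.
Local Open Scope ring_scope.
Local Open Scope classical_set_scope.

Section Defs.
Variable R : realType.
Variable n : nat.

Definition is_prob (pi : 'I_n -> R) : Prop :=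
  (forall x, 0 < pi x) /\ \sum_(x < n) pi x = 1.

Definition transition_matrix (P : 'M[R]_n) : Prop :=
  (forall x y, 0 <= P x y) /\ (forall x, \sum_(y < n) P x y = 1).

Definition rate_matrix (Q : 'M[R]_n) : Prop :=
  (forall x y, x != y -> 0 <= Q x y) /\ (forall x, \sum_(y < n) Q x y = 0).

Definition offdiag (A : 'M[R]_n) : 'M[R]_n :=
  \matrix_(i, j) (if i == j then 0 else A i j).

Definition irreducible (A : 'M[R]_n) : Prop :=
  forall x y, exists k : nat, 0 < (offdiag A ^+ k) x y.

Definition reversible (pi : 'I_n -> R) (A : 'M[R]_n) : Prop :=
  forall x y, pi x * A x y = pi y * A y x.

(* Second largest eigenvalue (counted with multiplicity) of a matrix whose
   eigenvalues are real, diagonalizable, and bounded above by the top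
   eigenvalue [top]: it equals [top] if the [top]-eigenspace has dimension
   >= 2, and otherwise the largest eigenvalue strictly below [top]. *)
Definition lambda2 (top : R) (A : 'M[R]_n) : R :=
  if (2 <= \rank (eigenspace A top))%N then top
  else sup [set a : R | eigenvalue A a /\ a < top].

Definition GapP (P : 'M[R]_n) : R := 1 - lambda2 1 P.
Definition GapQ (Q : 'M[R]_n) : R := - lambda2 0 Q.

Definition is_min_off (xs : 'I_n) (f : 'I_n -> R) (m : R) : Prop :=
  (exists2 x, x != xs & m = f x) /\ (forall x, x != xs -> m <= f x).

Definition kappa (p alpha nu : R) : R :=
  2^-1 * (1 - p `^ (- ((nu - alpha) / 2))) ^+ 3.

End Defs.

(* Let M be reversible w.r.t. pi with row sums top (top = 1 for P, 0 for Q),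
   and G = M - top its generator.  If v is a left eigenvector of M for an
   eigenvalue a <> top, then f = v / pi is a right eigenfunction of G, centred
   under pi, with (a - top) sum_x pi x (f x)^2 = - E(f), E the Dirichlet form.
   Telescoping f x - f xs along the path x, T x, T^2 x, ..., which reaches xs
   because pi increases along it, and applying Cauchy-Schwarz with weights t^k,
   where t^2 = p^alpha / p^nu, gives the Poincare inequality
     sum_x pi x (f x - f xs)^2 <= (1 - t)^-2 sum_x pi x (f x - f (T x))^2:
   the k-th T-preimages of a state z carry pi-mass at most t^(2k) pi z, since
   z has at most p^alpha neighbours, each at least p^nu times lighter.  The
   right-hand sum is at most 2 E(f) / m, so top - a >= m (1 - t)^2 / 2, which
   is at least kappa m.  For a = top the same inequality with E(f) = 0 shows
   that the top eigenspace is spanned by pi.  Finally, reversibility makes all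
   complex eigenvalues real, and the negative trace of G provides one below
   top. *)

From HB Require Import structures.
From mathcomp Require Import all_boot all_order all_algebra.
From mathcomp Require Import all_classical all_reals.
From mathcomp Require Import topology normedtype sequences exp.
From mathcomp Require Import ring lra complex.
Import Order.TTheory GRing.Theory Num.Theory.
Local Open Scope ring_scope.

Set Implicit Arguments.
Unset Strict Implicit.
Unset Printing Implicit Defensive.

Section Sums.
Variable R : realFieldType.

Lemma ler_sum_term (I : finType) (F : I -> R) j :
  (forall i, 0 <= F i) -> F j <= \sum_i F i.
Proof. by move=> F_ge0; rewrite (bigD1 j) //= lerDl sumr_ge0. Qed.

Lemma cauchy_schwarz_weighted (I : finType) (w d : I -> R) :
  (forall i, 0 < w i) ->
  (\sum_i d i) ^+ 2 <= (\sum_i w i) * \sum_i d i ^+ 2 / w i.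
Proof.
move=> w_gt0; have [i0 _|I0] := pickP (@predT I); last first.
  by rewrite !big_pred0 // expr0n mul0r.
set D := \sum_i d i; set W := \sum_i w i; set S := \sum_i _ / _.
have W_gt0 : 0 < W.
  exact: lt_le_trans (w_gt0 i0) (ler_sum_term _ (fun i => ltW (w_gt0 i))).
have : 0 <= \sum_i w i * (d i / w i - D / W) ^+ 2.
  by apply: sumr_ge0 => i _; rewrite mulr_ge0 ?sqr_ge0 ?ltW.
have -> : \sum_i w i * (d i / w i - D / W) ^+ 2 = S - D ^+ 2 / W.
  have termE i : w i * (d i / w i - D / W) ^+ 2
      = d i ^+ 2 / w i - 2 * (D / W) * d i + (D / W) ^+ 2 * w i.
    by field; rewrite gt_eqF // gt_eqF.
  rewrite (eq_bigr _ (fun i _ => termE i)) !big_split /= sumrN -!mulr_sumr -/D -/W -/S.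
  by field; rewrite gt_eqF.
by rewrite subr_ge0 ler_pdivrMr // mulrC.
Qed.

Lemma sum_geometric_le (t : R) K : 0 <= t < 1 ->
  \sum_(k < K) t ^+ k <= (1 - t)^-1.
Proof.
case/andP=> t_ge0 t_lt1; have t1_gt0 : 0 < 1 - t by rewrite subr_gt0.
rewrite -(ler_pM2l t1_gt0) mulfV ?gt_eqF // -opprB mulNr -subrX1 opprB.
by rewrite lerBlDr lerDl exprn_ge0.
Qed.

Lemma sum_centered_le (I : finType) (pi f : I -> R) c :
  (forall x, 0 <= pi x) -> \sum_x pi x * f x = 0 ->
  \sum_x pi x * f x ^+ 2 <= \sum_x pi x * (f x - c) ^+ 2.
Proof.
move=> pi_ge0 centered.
have -> : \sum_x pi x * (f x - c) ^+ 2
    = \sum_x pi x * f x ^+ 2 - 2 * c * \sum_x pi x * f x + c ^+ 2 * \sum_x pi x.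
  by rewrite !mulr_sumr -sumrB -big_split /=; apply: eq_bigr => x _; ring.
by rewrite centered mulr0 subr0 lerDl mulr_ge0 ?sqr_ge0 ?sumr_ge0.
Qed.

End Sums.

Section CanonicalPaths.
Variables (R : realFieldType) (n : nat) (pi : 'I_n -> R) (xs : 'I_n).
Variables (T : 'I_n -> 'I_n) (t : R).
Hypothesis pi_gt0 : forall x, 0 < pi x.
Hypothesis T_xs : T xs = xs.
Hypothesis pi_T : forall x, x != xs -> pi x < pi (T x).
Hypothesis preimage_mass : forall z, z != xs ->
  \sum_(y | T y == z) pi y <= t ^+ 2 * pi z.
Hypothesis t_gt0 : 0 < t.
Hypothesis t_lt1 : t < 1.

Let t_01 : 0 <= t < 1. Proof. by rewrite ltW. Qed.

Lemma iter_T_xs k : iter k T xs = xs.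
Proof. by elim: k => //= k ->. Qed.

Lemma iter_T_reaches_xs x : iter n T x = xs.
Proof.
suff reach c y : (#|[pred z | (pi y < pi z)%R]| <= c)%N -> iter c T y = xs.
  by apply: reach; rewrite -[leqRHS]card_ord max_card.
elim: c y => [|c IHc] y.
  case: (eqVneq y xs) => // y_xs; rewrite leqn0 => /eqP/card0_eq/(_ (T y)).
  by rewrite inE pi_T.
rewrite iterSr; case: (eqVneq y xs) => [-> _|y_xs le_c]; first by rewrite T_xs iter_T_xs.
apply: IHc; rewrite -ltnS; apply: leq_trans le_c; apply: proper_card; apply/properP.
split; last by exists (T y); rewrite !inE ?ltxx ?pi_T.
by apply/fintype.subsetP => z; rewrite !inE; apply: lt_trans (pi_T y_xs).
Qed.

Lemma telescope_T (f : 'I_n -> R) x :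
  f x - f xs = \sum_(k < n) (f (iter k T x) - f (iter k.+1 T x)).
Proof.
rewrite -(big_mkord xpredT (fun k => f (iter k T x) - f (iter k.+1 T x))).
rewrite -[RHS]opprK -sumrN (eq_bigr (fun k => f (iter k.+1 T x) - f (iter k T x))).
  by rewrite telescope_sumr // iter_T_reaches_xs opprB.
by move=> k _; rewrite opprB.
Qed.

Lemma preimage_mass_iter k z : z != xs ->
  \sum_(x | iter k T x == z) pi x <= (t ^+ 2) ^+ k * pi z.
Proof.
elim: k z => [|k IHk] z z_xs; first by rewrite big_pred1_eq expr0 mul1r.
rewrite (partition_big (iter k T) (fun y => T y == z)) //=.
have y_xs y : T y == z -> y != xs.
  by move=> /eqP Tyz; apply: contra_neq z_xs => y_eq; rewrite -Tyz y_eq.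
apply: (@le_trans _ _ (\sum_(y | T y == z) (t ^+ 2) ^+ k * pi y)).
  apply: ler_sum => y Tyz; apply: le_trans (IHk y (y_xs _ Tyz)).
  rewrite (eq_bigl (fun x => iter k T x == y)) // => x.
  by case: (eqVneq (iter k T x) y) => [->|]; rewrite ?Tyz ?andbF.
rewrite -mulr_sumr [(t ^+ 2) ^+ k.+1]exprS [_ * (_ ^+ k)]mulrC -mulrA.
by apply: ler_wpM2l; [exact/exprn_ge0/sqr_ge0 | exact: preimage_mass].
Qed.

Lemma sum_iter_le k (h : 'I_n -> R) : (forall z, 0 <= h z) -> h xs = 0 ->
  \sum_x pi x * h (iter k T x) <= (t ^+ 2) ^+ k * \sum_z pi z * h z.
Proof.
move=> h_ge0 h_xs; rewrite (partition_big (iter k T) xpredT) //= mulr_sumr.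
apply: ler_sum => z _; rewrite (eq_bigr (fun x => pi x * h z)); last first.
  by move=> x /eqP ->.
have [->|z_xs] := eqVneq z xs; first by rewrite h_xs big1 ?mulr0 // => x _; rewrite mulr0.
rewrite -mulr_suml mulrA; apply: ler_wpM2r => //.
exact: preimage_mass_iter.
Qed.

Lemma telescope_T_sqr_le (f : 'I_n -> R) x :
  (f x - f xs) ^+ 2
    <= (1 - t)^-1 * \sum_(k < n) (f (iter k T x) - f (T (iter k T x))) ^+ 2 / t ^+ k.
Proof.
rewrite telescope_T.
apply: le_trans (@cauchy_schwarz_weighted _ _ (fun k : 'I_n => t ^+ k) _ _) _.
  by move=> k; exact: exprn_gt0.
apply: ler_wpM2r; last exact: sum_geometric_le t_01.
by apply: sumr_ge0 => k _; rewrite divr_ge0 ?sqr_ge0 ?exprn_ge0 ?ltW.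
Qed.

Lemma poincare_T (f : 'I_n -> R) :
  \sum_x pi x * (f x - f xs) ^+ 2
    <= (1 - t) ^- 2 * \sum_x pi x * (f x - f (T x)) ^+ 2.
Proof.
set d := fun z => f z - f (T z); set S := \sum_x pi x * d x ^+ 2.
set K := (1 - t)^-1.
have K_ge0 : 0 <= K by rewrite invr_ge0 subr_ge0 ltW.
have S_ge0 : 0 <= S by apply: sumr_ge0 => x _; rewrite mulr_ge0 ?sqr_ge0 ?ltW.
apply: (@le_trans _ _ (\sum_x pi x * (K * \sum_(k < n) d (iter k T x) ^+ 2 / t ^+ k))).
  by apply: ler_sum => x _; apply: ler_wpM2l; [exact: ltW | exact: telescope_T_sqr_le].
have -> : \sum_x pi x * (K * \sum_(k < n) d (iter k T x) ^+ 2 / t ^+ k)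
    = K * \sum_(k < n) t ^- k * \sum_x pi x * d (iter k T x) ^+ 2.
  transitivity (\sum_x \sum_(k < n) K * t ^- k * (pi x * d (iter k T x) ^+ 2)).
    by apply: eq_bigr => x _; rewrite !mulr_sumr; apply: eq_bigr => k _; ring.
  by rewrite exchange_big mulr_sumr; apply: eq_bigr => k _; rewrite -mulr_sumr mulrA.
rewrite -exprVn expr2 -mulrA ler_wpM2l //.
apply: (@le_trans _ _ (\sum_(k < n) t ^+ k * S)); last first.
  by rewrite -mulr_suml ler_wpM2r ?(sum_geometric_le _ t_01).
apply: ler_sum => k _.
have t_k : t ^- k * (t ^+ 2) ^+ k = t ^+ k.
  by rewrite exprAC expr2 mulrA mulVf ?mul1r // expf_neq0 // gt_eqF.
rewrite -[in X in _ <= X]t_k -mulrA.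
apply: ler_wpM2l; first by rewrite invr_ge0 exprn_ge0 ?ltW.
by apply: sum_iter_le => [z|]; rewrite ?sqr_ge0 // /d T_xs subrr expr0n.
Qed.

End CanonicalPaths.

Section Generator.
Variables (R : realFieldType) (n : nat) (pi : 'I_n -> R) (G : 'M[R]_n).
Hypothesis pi_gt0 : forall x, 0 < pi x.
Hypothesis G_rev : forall x y, pi x * G x y = pi y * G y x.
Hypothesis G_row0 : forall x, \sum_y G x y = 0.
Hypothesis G_offdiag_ge0 : forall x y, x != y -> 0 <= G x y.

(* Reversibility turns a left eigenvector [v] into the right eigenfunction
   [v / pi], on which the Dirichlet form can act. *)
Definition density (v : 'rV[R]_n) (x : 'I_n) : R := v 0 x / pi x.

Lemma sum_density_sqr_gt0 (v : 'rV[R]_n) :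
  v != 0 -> 0 < \sum_x pi x * density v x ^+ 2.
Proof.
move=> v_neq0; have [x v_x] : exists x, v 0 x != 0.
  apply/existsP; apply: contraR v_neq0 => /existsPn v0.
  by apply/eqP/rowP => x; rewrite mxE; apply/eqP; rewrite (negbNE (v0 x)).
apply: lt_le_trans (ler_sum_term x _) => [|y]; last by rewrite mulr_ge0 ?sqr_ge0 ?ltW.
by rewrite mulr_gt0 // exprn_even_gt0 //= mulf_neq0 // invr_eq0 gt_eqF.
Qed.

Definition dirichlet_form (f : 'I_n -> R) : R :=
  2^-1 * \sum_x \sum_y pi x * G x y * (f x - f y) ^+ 2.

Lemma dirichlet_form_term_ge0 (f : 'I_n -> R) x y :
  0 <= pi x * G x y * (f x - f y) ^+ 2.
Proof.
have [->|x_y] := eqVneq x y; first by rewrite subrr expr0n mulr0.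
by rewrite mulr_ge0 ?sqr_ge0 // mulr_ge0 ?G_offdiag_ge0 ?ltW.
Qed.

Lemma dirichlet_form_ge_map (f : 'I_n -> R) (g : 'I_n -> 'I_n) :
  2^-1 * \sum_x pi x * G x (g x) * (f x - f (g x)) ^+ 2 <= dirichlet_form f.
Proof.
rewrite ler_pM2l ?invr_gt0 ?ltr0n //; apply: ler_sum => x _.
exact: ler_sum_term (g x) (dirichlet_form_term_ge0 f x).
Qed.

Lemma generator_bilinear_form (f g : 'I_n -> R) :
  \sum_x pi x * f x * (\sum_y G x y * g y) = \sum_x \sum_y pi x * G x y * f x * g y.
Proof. by apply: eq_bigr => x _; rewrite mulr_sumr; apply: eq_bigr => y _; ring. Qed.

Lemma generator_self_adjoint (f g : 'I_n -> R) :
  \sum_x pi x * f x * (\sum_y G x y * g y) = \sum_x pi x * g x * (\sum_y G x y * f y).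
Proof.
rewrite !generator_bilinear_form exchange_big; apply: eq_bigr => x _; apply: eq_bigr => y _.
by rewrite G_rev; ring.
Qed.

Lemma generator_quadratic_form (f : 'I_n -> R) :
  \sum_x pi x * f x * (\sum_y G x y * f y) = - dirichlet_form f.
Proof.
have row_term (h : 'I_n -> R) : \sum_x \sum_y pi x * G x y * h x = 0.
  by rewrite big1 // => x _; rewrite -big_distrl /= -mulr_sumr G_row0 mulr0 mul0r.
have col_term (h : 'I_n -> R) : \sum_x \sum_y pi x * G x y * h y = 0.
  rewrite exchange_big -[RHS](row_term h); apply: eq_bigr => y _.
  by apply: eq_bigr => x _; rewrite G_rev.
have expand : \sum_x \sum_y pi x * G x y * (f x - f y) ^+ 2
    = \sum_x \sum_y pi x * G x y * f x ^+ 2 + \sum_x \sum_y pi x * G x y * f y ^+ 2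
      - 2 * \sum_x \sum_y pi x * G x y * f x * f y.
  rewrite mulr_sumr -big_split -sumrB /=; apply: eq_bigr => x _.
  by rewrite mulr_sumr -big_split -sumrB /=; apply: eq_bigr => y _; ring.
rewrite /dirichlet_form expand row_term col_term add0r sub0r mulrN opprK mulrA.
by rewrite mulVf ?pnatr_eq0 // mul1r generator_bilinear_form.
Qed.

Lemma generator_mul_density (v : 'rV[R]_n) x :
  \sum_y G x y * density v y = density (v *m G) x.
Proof.
have pi_neq0 y : pi y != 0 by rewrite gt_eqF.
apply: (mulfI (pi_neq0 x)); rewrite /density mxE [RHS]mulrC divfK // mulr_sumr.
by apply: eq_bigr => y _; rewrite !mulrA G_rev; field.
Qed.

Lemma left_eigen_dirichlet (v : 'rV[R]_n) a : v *m G = a *: v ->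
  a * \sum_x pi x * density v x ^+ 2 = - dirichlet_form (density v).
Proof.
move=> v_eigen; rewrite -generator_quadratic_form mulr_sumr; apply: eq_bigr => x _.
by rewrite generator_mul_density v_eigen /density mxE; ring.
Qed.

(* The hypotheses say that [a + i b] is a complex left eigenvector for [r + i s]. *)
Lemma left_eigen_pair_imag0 (a b : 'rV[R]_n) r s : (a != 0) || (b != 0) ->
  a *m G = r *: a - s *: b -> b *m G = r *: b + s *: a -> s = 0.
Proof.
move=> ab_neq0 a_eigen b_eigen.
set F := density a; set H := density b.
have GF x : \sum_y G x y * F y = r * F x - s * H x.
  by rewrite generator_mul_density a_eigen /F /H /density !mxE; field; rewrite gt_eqF.
have GH x : \sum_y G x y * H y = r * H x + s * F x.
  by rewrite generator_mul_density b_eigen /F /H /density !mxE; field; rewrite gt_eqF.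
have : s * (\sum_x pi x * F x ^+ 2 + \sum_x pi x * H x ^+ 2) = 0.
  have := generator_self_adjoint F H.
  rewrite (eq_bigr _ (fun x _ => congr1 _ (GH x))) (eq_bigr _ (fun x _ => congr1 _ (GF x))).
  move/eqP; rewrite -subr_eq0 -sumrB => /eqP self_adj.
  by rewrite -[RHS]self_adj -big_split mulr_sumr /=; apply: eq_bigr => x _; ring.
have ge0 (v : 'rV[R]_n) : 0 <= \sum_x pi x * density v x ^+ 2.
  by apply: sumr_ge0 => x _; rewrite mulr_ge0 ?sqr_ge0 ?ltW.
have norm_gt0 : 0 < \sum_x pi x * F x ^+ 2 + \sum_x pi x * H x ^+ 2.
  case/orP: ab_neq0 => [/sum_density_sqr_gt0 a_gt0|/sum_density_sqr_gt0 b_gt0].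
    exact: ltr_pwDl a_gt0 (ge0 b).
  exact: ltr_pwDr b_gt0 (ge0 a).
by move/eqP; rewrite mulf_eq0 (gt_eqF norm_gt0) orbF => /eqP.
Qed.

Lemma left_eigen_sum (v : 'rV[R]_n) a : v *m G = a *: v -> a * \sum_x v 0 x = 0.
Proof.
move=> /rowP v_eigen.
have coord x : a * v 0 x = \sum_y v 0 y * G y x by have := v_eigen x; rewrite !mxE.
rewrite mulr_sumr (eq_bigr _ (fun x _ => coord x)) exchange_big big1 // => y _.
by rewrite -mulr_sumr G_row0 mulr0.
Qed.

Lemma generator_trace_lt0 x0 y0 : x0 != y0 -> 0 < G x0 y0 -> \tr G < 0.
Proof.
move=> x0_y0 G_gt0.
have diag x : G x x = - \sum_(y | y != x) G x y.
  by apply/eqP; rewrite -addr_eq0; have := G_row0 x; rewrite (bigD1 x) //= => ->.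
have off_ge0 x : 0 <= \sum_(y | y != x) G x y.
  by apply: sumr_ge0 => y y_x; rewrite G_offdiag_ge0 // eq_sym.
rewrite /mxtrace (eq_bigr _ (fun x _ => diag x)) sumrN oppr_lt0.
apply: lt_le_trans (ler_sum_term x0 off_ge0); rewrite (bigD1 y0) 1?eq_sym //=.
apply: lt_le_trans G_gt0 _; rewrite lerDl sumr_ge0 // => y /andP[y_x _].
by rewrite G_offdiag_ge0 // eq_sym.
Qed.

End Generator.

Section GeneratorSpectrum.
Variables (R : realFieldType) (n : nat) (pi : 'I_n -> R) (G : 'M[R]_n).
Variables (xs : 'I_n) (T : 'I_n -> 'I_n) (t m : R).
Hypothesis pi_gt0 : forall x, 0 < pi x.
Hypothesis G_rev : forall x y, pi x * G x y = pi y * G y x.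
Hypothesis G_row0 : forall x, \sum_y G x y = 0.
Hypothesis G_offdiag_ge0 : forall x y, x != y -> 0 <= G x y.
Hypothesis T_xs : T xs = xs.
Hypothesis pi_T : forall x, x != xs -> pi x < pi (T x).
Hypothesis preimage_mass : forall z, z != xs ->
  \sum_(y | T y == z) pi y <= t ^+ 2 * pi z.
Hypothesis t_gt0 : 0 < t.
Hypothesis t_lt1 : t < 1.
Hypothesis m_ge0 : 0 <= m.
Hypothesis m_le_G_T : forall x, x != xs -> m <= G x (T x).

Lemma dirichlet_form_ge_T (f : 'I_n -> R) :
  m / 2 * \sum_x pi x * (f x - f (T x)) ^+ 2 <= dirichlet_form pi G f.
Proof.
apply: le_trans (dirichlet_form_ge_map pi_gt0 G_offdiag_ge0 f T).
rewrite [m / 2]mulrC -mulrA ler_wpM2l ?invr_ge0 ?ler0n // mulr_sumr.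
apply: ler_sum => x _; have [->|x_xs] := eqVneq x xs.
  by rewrite T_xs subrr expr0n !mulr0.
rewrite mulrCA -mulrA; apply: ler_wpM2l; first exact: ltW.
by apply: ler_wpM2r; [exact: sqr_ge0 | exact: m_le_G_T].
Qed.

Lemma dirichlet_form_poincare (f : 'I_n -> R) :
  m * (1 - t) ^+ 2 / 2 * \sum_x pi x * (f x - f xs) ^+ 2 <= dirichlet_form pi G f.
Proof.
apply: le_trans (dirichlet_form_ge_T f).
set V := \sum_x _; rewrite (_ : _ * V = m / 2 * ((1 - t) ^+ 2 * V)); last by ring.
apply: ler_wpM2l; first by rewrite divr_ge0.
by rewrite -ler_pdivlMl ?exprn_gt0 ?subr_gt0 //; exact: poincare_T.
Qed.

Lemma left_eigenvalue_neq0_le (v : 'rV[R]_n) a : v != 0 -> v *m G = a *: v -> a != 0 ->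
  a <= - (m * (1 - t) ^+ 2 / 2).
Proof.
move=> v_neq0 v_eigen a_neq0; set f := density pi v.
have centered : \sum_x pi x * f x = 0.
  have /eqP := left_eigen_sum G_row0 v_eigen.
  rewrite mulf_eq0 (negbTE a_neq0) => /eqP sum_v0.
  rewrite -[RHS]sum_v0.
  by apply: eq_bigr => x _; rewrite /f /density mulrC divfK ?gt_eqF.
have norm_gt0 := sum_density_sqr_gt0 pi_gt0 v_neq0.
rewrite lerNr -(ler_pM2r norm_gt0) mulNr.
rewrite (left_eigen_dirichlet pi_gt0 G_rev G_row0 v_eigen) opprK.
have c_ge0 : 0 <= m * (1 - t) ^+ 2 / 2 by rewrite divr_ge0 // mulr_ge0 // sqr_ge0.
apply: le_trans (dirichlet_form_poincare f); rewrite ler_wpM2l //.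
by apply: (sum_centered_le (f xs) _ centered) => x; exact: ltW.
Qed.

Lemma left_eigenvalue0_pi (v : 'rV[R]_n) : 0 < m -> v *m G = 0 ->
  exists c, v = c *: \row_x pi x.
Proof.
move=> m_gt0 v_eigen; set f := density pi v.
have dirichlet0 : dirichlet_form pi G f = 0.
  have v_eigen0 : v *m G = 0 *: v by rewrite scale0r.
  have := left_eigen_dirichlet pi_gt0 G_rev G_row0 v_eigen0.
  by rewrite mul0r => /eqP; rewrite eq_sym oppr_eq0 => /eqP.
have term_ge0 y : 0 <= pi y * (f y - f xs) ^+ 2 by rewrite mulr_ge0 ?sqr_ge0 ?ltW.
have var0 : \sum_x pi x * (f x - f xs) ^+ 2 = 0.
  apply/le_anti; rewrite sumr_ge0 // andbT.
  have := dirichlet_form_poincare f; rewrite dirichlet0 pmulr_rle0 //.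
  by rewrite divr_gt0 // mulr_gt0 // exprn_gt0 // subr_gt0.
exists (f xs); apply/rowP => x; rewrite !mxE.
have /eqP := psumr_eq0P (fun y _ => term_ge0 y) var0 (i := x) isT.
rewrite mulf_eq0 gt_eqF // sqrf_eq0 subr_eq0 => /eqP <-.
by rewrite /f /density divfK ?gt_eqF.
Qed.

End GeneratorSpectrum.

Lemma eigenvalue_neq0_of_trace (C : closedFieldType) n (A : 'M[C]_n) :
  \tr A != 0 -> exists2 z, eigenvalue A z & z != 0.
Proof.
case: n A => [|n] A trA; first by rewrite /mxtrace big_ord0 eqxx in trA.
have [r cpE] := closed_field_poly_normal (char_poly A).
rewrite (monicP (char_poly_monic A)) scale1r in cpE.
suff [z z_r z_neq0] : exists2 z, z \in r & z != 0.
  by exists z; rewrite // eigenvalue_root_char cpE root_prod_XsubC.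
apply/hasP; apply: contraNT trA => /hasPn r0.
have cpX : char_poly A = 'X^(size r).
  rewrite cpE (eq_big_seq (fun=> 'X)) ?big_const_seq ?count_predT ?iter_mulr_1 //.
  by move=> z /r0; rewrite negbK => /eqP ->; rewrite subr0.
have size_r : size r = n.+1.
  by apply: succn_inj; rewrite -(size_char_poly A) cpX size_polyXn.
by rewrite -oppr_eq0 -char_poly_trace // cpX size_r coefXn /= ltn_eqF.
Qed.

Section ReversibleComplexSpectrum.
Variables (R : rcfType) (n : nat) (pi : 'I_n -> R) (G : 'M[R]_n).
Hypothesis pi_gt0 : forall x, 0 < pi x.
Hypothesis G_rev : forall x y, pi x * G x y = pi y * G y x.

Local Notation GC := (map_mx (real_complex R) G).
Local Notation Re_mx := (map_mx (@complex.Re R)).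
Local Notation Im_mx := (map_mx (@complex.Im R)).

Lemma complex_left_eigen_parts (v : 'rV[R[i]]_n) z : v *m GC = z *: v ->
  Re_mx v *m G = complex.Re z *: Re_mx v - complex.Im z *: Im_mx v /\
  Im_mx v *m G = complex.Re z *: Im_mx v + complex.Im z *: Re_mx v.
Proof.
have ReM (u w : R[i]) :
  complex.Re (u * w) = complex.Re u * complex.Re w - complex.Im u * complex.Im w.
  by case: u; case: w.
have ImM (u w : R[i]) :
  complex.Im (u * w) = complex.Re u * complex.Im w + complex.Im u * complex.Re w.
  by case: u; case: w.
move=> /rowP v_eigen; split; apply/rowP => x; have := v_eigen x; rewrite !mxE.
  move=> /(congr1 (@complex.Re R)); rewrite raddf_sum [complex.Re (z * _)]ReM => <-.
  by apply: eq_big => // y _; rewrite !mxE /= ReM /= mulr0 subr0.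
move=> /(congr1 (@complex.Im R)); rewrite raddf_sum [complex.Im (z * _)]ImM addrC => <-.
by apply: eq_big => // y _; rewrite !mxE /= ImM /= mulr0 add0r.
Qed.

Lemma reversible_complex_eigenvalue_real (z : R[i]) : eigenvalue GC z ->
  z = (complex.Re z)%:C%C /\ eigenvalue G (complex.Re z).
Proof.
case/eigenvalueP => v /complex_left_eigen_parts[a_eigen b_eigen] v_neq0.
set a := map_mx _ v in a_eigen b_eigen; set b := map_mx _ v in a_eigen b_eigen.
have ab_neq0 : (a != 0) || (b != 0).
  apply: contraNT v_neq0; rewrite negb_or !negbK => /andP[/eqP a0 /eqP b0].
  apply/eqP/rowP => x; have /rowP/(_ x) := a0; have /rowP/(_ x) := b0; rewrite !mxE.
  by case: (v 0 x) => /= vr vi -> ->.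
have Im_z0 := left_eigen_pair_imag0 pi_gt0 G_rev ab_neq0 a_eigen b_eigen.
rewrite Im_z0 !scale0r ?subr0 ?addr0 in a_eigen b_eigen; split.
  by case: z Im_z0 {a_eigen b_eigen} => zr zi /= ->.
by case/orP: ab_neq0 => ?; apply/eigenvalueP; [exists a | exists b].
Qed.

Lemma reversible_eigenvalue_neq0 : \tr G != 0 -> exists2 r, eigenvalue G r & r != 0.
Proof.
move=> trG; have trGC : \tr GC != 0 by rewrite trace_map_mx fmorph_eq0.
have [z /reversible_complex_eigenvalue_real[zE Gz] z_neq0] := eigenvalue_neq0_of_trace trGC.
by exists (complex.Re z) => //; apply: contraNneq z_neq0 => r0; rewrite zE r0.
Qed.

End ReversibleComplexSpectrum.

Section Lambda2.
Variables (R : realType) (n : nat).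
Local Open Scope classical_set_scope.

Lemma lambda2_le_top (A : 'M[R]_n) top : 0 <= top -> lambda2 top A <= top.
Proof.
move=> top_ge0; rewrite /lambda2; case: ifP => // _.
have [[a a_E]|no_eig] := pselect ([set a | eigenvalue A a /\ a < top] !=set0).
  by apply: ge_sup; [exists a | move=> b [_ /ltW]].
rewrite (_ : [set a | _] = set0) ?sup0 //.
by apply/seteqP; split => // a a_eig; apply: no_eig; exists a.
Qed.

Lemma lambda2_le (A : 'M[R]_n) top b :
  (\rank (eigenspace A top) <= 1)%N -> (exists a, eigenvalue A a /\ a < top) ->
  (forall a, eigenvalue A a -> a < top -> a <= b) -> lambda2 top A <= b.
Proof.
move=> rank_le1 [a a_eig] eig_le; rewrite /lambda2 ifN -?ltnNge ?ltnS //.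
by apply: ge_sup; [exists a | move=> c [c_eig /(eig_le _ c_eig)]].
Qed.

End Lambda2.

Section ReversibleMatrix.
Variables (R : realType) (n : nat) (pi : 'I_n -> R) (M : 'M[R]_n) (top : R).
Variables (xs : 'I_n) (T : 'I_n -> 'I_n) (t m : R).
Hypothesis pi_gt0 : forall x, 0 < pi x.
Hypothesis M_rev : reversible pi M.
Hypothesis M_row : forall x, \sum_y M x y = top.
Hypothesis M_offdiag_ge0 : forall x y, x != y -> 0 <= M x y.
Hypothesis T_xs : T xs = xs.
Hypothesis pi_T : forall x, x != xs -> pi x < pi (T x).
Hypothesis preimage_mass : forall z, z != xs ->
  \sum_(y | T y == z) pi y <= t ^+ 2 * pi z.
Hypothesis t_gt0 : 0 < t.
Hypothesis t_lt1 : t < 1.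
Hypothesis m_min : is_min_off xs (fun x => M x (T x)) m.

Let G := M - top%:M.

Let T_neq x : x != xs -> x != T x.
Proof. by move=> /pi_T; apply: contraTneq => <-; rewrite ltxx. Qed.

Lemma min_off_ge0 : 0 <= m.
Proof. by case: m_min => -[x x_xs ->] _; rewrite M_offdiag_ge0 ?T_neq. Qed.

Lemma generator_offdiag x y : x != y -> G x y = M x y.
Proof. by move=> x_y; rewrite !mxE (negbTE x_y) mulr0n subr0. Qed.

Let G_offdiag_ge0 x y : x != y -> 0 <= G x y.
Proof. by move=> x_y; rewrite generator_offdiag // M_offdiag_ge0. Qed.

Let G_row0 x : \sum_y G x y = 0.
Proof.
rewrite (eq_bigr (fun y => M x y - top *+ (x == y))) => [|y _]; last by rewrite !mxE.
rewrite sumrB M_row (bigD1 x) //= eqxx big1 ?addr0 ?subrr // => y y_x.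
by rewrite eq_sym (negbTE y_x) mulr0n.
Qed.

Let G_rev x y : pi x * G x y = pi y * G y x.
Proof.
have [->//|x_y] := eqVneq x y.
by rewrite (generator_offdiag x_y) generator_offdiag 1?eq_sym // M_rev.
Qed.

Let m_le_G_T x : x != xs -> m <= G x (T x).
Proof. by move=> x_xs; rewrite generator_offdiag ?T_neq //; case: m_min => _; apply. Qed.

Lemma eigenspace_generator a : eigenspace G (a - top) = eigenspace M a.
Proof. by rewrite /eigenspace raddfB /= opprB addrA subrK. Qed.

Lemma eigenspace_top_rank_le1 : 0 < m -> (\rank (eigenspace M top) <= 1)%N.
Proof.
move=> m_gt0; apply: leq_trans (mxrankS _) (rank_leq_row (\row_x pi x)).
apply/row_subP => i; rewrite -eigenspace_generator subrr.
have /eigenspaceP := row_sub i (eigenspace G 0); rewrite scale0r => v_eigen.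
have [c ->] := left_eigenvalue0_pi pi_gt0 G_rev G_row0 G_offdiag_ge0 T_xs pi_T
  preimage_mass t_gt0 t_lt1 min_off_ge0 m_le_G_T m_gt0 v_eigen.
exact: scalemx_sub.
Qed.

Lemma eigenvalue_neq_top_le a : eigenvalue M a -> a != top ->
  a <= top - m * (1 - t) ^+ 2 / 2.
Proof.
rewrite /eigenvalue -eigenspace_generator => /eigenvalueP[v v_eigen v_neq0] a_top.
have := left_eigenvalue_neq0_le pi_gt0 G_rev G_row0 G_offdiag_ge0 T_xs pi_T
  preimage_mass t_gt0 t_lt1 min_off_ge0 m_le_G_T v_neq0 v_eigen.
by rewrite subr_eq0 a_top => /(_ isT); lra.
Qed.

(* [lambda2] is a [sup] over the eigenvalues below [top], and [sup set0 = 0]: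
   a lower bound on the gap needs such an eigenvalue to exist. *)
Lemma exists_eigenvalue_lt_top : 0 < m -> exists a, eigenvalue M a /\ a < top.
Proof.
move=> m_gt0; case: m_min => -[x0 x0_xs m_def] _.
have G_gt0 : 0 < G x0 (T x0) by rewrite generator_offdiag ?T_neq // -m_def.
have trG := generator_trace_lt0 G_row0 G_offdiag_ge0 (T_neq x0_xs) G_gt0.
have [r G_eig r_neq0] := reversible_eigenvalue_neq0 pi_gt0 G_rev (ltr0_neq0 trG).
have M_eig : eigenvalue M (r + top) by rewrite /eigenvalue -eigenspace_generator addrK.
exists (r + top); split=> //; apply: le_lt_trans (eigenvalue_neq_top_le M_eig _) _.
  by rewrite -subr_eq0 addrK.
by rewrite ltrBlDr ltrDl divr_gt0 // mulr_gt0 // exprn_gt0 // subr_gt0.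
Qed.

Lemma lambda2_gap : 0 <= top -> m * (1 - t) ^+ 2 / 2 <= top - lambda2 top M.
Proof.
move=> top_ge0; rewrite lerBrDr addrC -lerBrDr.
have [m0|m_neq0] := eqVneq m 0.
  by rewrite m0 !mul0r subr0 lambda2_le_top.
have m_gt0 : 0 < m by rewrite lt_def m_neq0 min_off_ge0.
apply: lambda2_le; first exact: eigenspace_top_rank_le1.
  exact: exists_eigenvalue_lt_top.
by move=> a a_eig /lt_eqF a_top; apply: eigenvalue_neq_top_le a_eig _; rewrite a_top.
Qed.

End ReversibleMatrix.

Section DecayFactor.
Variables (R : realType) (p alpha nu : R).
Hypothesis p_gt1 : 1 < p.
Hypothesis alpha_lt_nu : alpha < nu.

Definition decay_factor : R := p `^ (- ((nu - alpha) / 2)).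

Let p_gt0 : 0 < p. Proof. exact: lt_trans ltr01 p_gt1. Qed.

Lemma powR_gt1 e : 0 < e -> 1 < p `^ e.
Proof.
move=> e_gt0; rewrite lt_neqAle eq_sym powR_eq1 (gt_eqF p_gt1) (lt_gtF p_gt0).
by rewrite (gt_eqF e_gt0) /= -[X in X <= _](powRr0 p) ler_powR ?ltW.
Qed.

Lemma decay_factor_gt0 : 0 < decay_factor.
Proof. exact: powR_gt0. Qed.

Lemma decay_factor_lt1 : decay_factor < 1.
Proof.
by rewrite /decay_factor powRN invf_lt1 ?powR_gt0 // powR_gt1 // divr_gt0 // subr_gt0.
Qed.

Lemma decay_factor_sqr : decay_factor ^+ 2 = p `^ alpha / p `^ nu.
Proof.
rewrite -powR_mulrn ?powR_ge0 // -powRrM -powRB ?(gt_eqF p_gt0) ?implybT //.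
by congr (_ `^ _); field.
Qed.

Lemma kappa_le : kappa p alpha nu <= (1 - decay_factor) ^+ 2 / 2.
Proof.
have : (1 - decay_factor) ^+ 3 <= (1 - decay_factor) ^+ 2.
  by rewrite exprS ler_piMl ?sqr_ge0 // gerBl ltW // decay_factor_gt0.
rewrite /kappa -/decay_factor; lra.
Qed.

End DecayFactor.

Lemma preimage_mass_le (R : realFieldType) n (pi : 'I_n -> R)
    (N : 'I_n -> {set 'I_n}) (T : 'I_n -> 'I_n) xs (A B : R) :
  (forall x, 0 <= pi x) -> 0 < B ->
  (forall x y, (y \in N x) = (x \in N y)) -> (forall x, (#|N x|%:R : R) <= A) ->
  T xs = xs -> (forall x, x != xs -> T x \in N x /\ B * pi x <= pi (T x)) ->
  forall z, z != xs -> \sum_(y | T y == z) pi y <= A / B * pi z.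
Proof.
move=> pi_ge0 B_gt0 N_sym N_card T_xs T_spec z z_xs.
have preimage y : T y == z -> y \in N z /\ pi y <= pi z / B.
  move=> /eqP Tyz; have y_xs : y != xs by apply: contra_neq z_xs => y_eq; rewrite -Tyz y_eq.
  have [Ty_N Ty_ge] := T_spec y y_xs.
  by rewrite N_sym -Tyz ler_pdivlMr // mulrC.
apply: (@le_trans _ _ (\sum_(y | T y == z) pi z / B)).
  by apply: ler_sum => y /preimage[].
rewrite (eq_bigl (mem [pred y | T y == z])) // sumr_const -mulr_natr.
have -> : A / B * pi z = pi z / B * A by ring.
rewrite ler_wpM2l ?divr_ge0 ?pi_ge0 ?(ltW B_gt0) //.
apply: le_trans (N_card z); rewrite ler_nat; apply: subset_leq_card.
by apply/fintype.subsetP => y /preimage[].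
Qed.

Theorem lemma3 (R : realType) (n : nat) (pi : 'I_n -> R) (p alpha nu : R)
  (N : 'I_n -> {set 'I_n}) (xs : 'I_n) (T : 'I_n -> 'I_n) :
  is_prob pi ->
  1 < p -> 0 < alpha ->
  (forall x y, (y \in N x) = (x \in N y)) ->
  (forall x, x \notin N x) ->
  (forall x, (#|N x|%:R : R) <= p `^ alpha) ->
  alpha < nu ->
  T xs = xs ->
  (forall x, x != xs -> T x \in N x /\ p `^ nu * pi x <= pi (T x)) ->
  (forall (P : 'M[R]_n) (m : R),
     transition_matrix P -> irreducible P -> reversible pi P ->
     is_min_off xs (fun x => P x (T x)) m ->
     kappa p alpha nu * m <= GapP P) /\
  (forall (Q : 'M[R]_n) (m : R),
     rate_matrix Q -> irreducible Q -> reversible pi Q ->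
     is_min_off xs (fun x => Q x (T x)) m ->
     kappa p alpha nu * m <= GapQ Q).
Proof.
move=> [pi_gt0 _] p_gt1 alpha_gt0 N_sym _ N_card alpha_lt_nu T_xs T_spec.
have pnu_gt1 : 1 < p `^ nu := powR_gt1 p_gt1 (lt_trans alpha_gt0 alpha_lt_nu).
have pi_T x : x != xs -> pi x < pi (T x).
  by move=> x_xs; apply: lt_le_trans (T_spec x x_xs).2; rewrite ltr_pMl.
have := preimage_mass_le (fun x => ltW (pi_gt0 x)) (lt_trans ltr01 pnu_gt1)
  N_sym N_card T_xs T_spec.
rewrite -decay_factor_sqr // => mass.
have t_gt0 : 0 < decay_factor p alpha nu by exact: decay_factor_gt0.
have t_lt1 := decay_factor_lt1 p_gt1 alpha_lt_nu.
have gap (M : 'M[R]_n) top m : 0 <= top -> reversible pi M ->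
    (forall x, \sum_y M x y = top) -> (forall x y, x != y -> 0 <= M x y) ->
    is_min_off xs (fun x => M x (T x)) m -> kappa p alpha nu * m <= top - lambda2 top M.
  move=> top_ge0 M_rev M_row M_ge0 m_min.
  have m_ge0 := min_off_ge0 M_ge0 pi_T m_min.
  apply: le_trans
    (lambda2_gap pi_gt0 M_rev M_row M_ge0 T_xs pi_T mass t_gt0 t_lt1 m_min top_ge0).
  by rewrite (mulrC _ m) -mulrA ler_wpM2l // kappa_le.
split=> [P m [P_ge0 P_row] _ P_rev m_min|Q m [Q_ge0 Q_row] _ Q_rev m_min].
  exact: gap ler01 P_rev P_row (fun x y _ => P_ge0 x y) m_min.
by rewrite /GapQ -sub0r; exact: gap (lexx 0) Q_rev Q_row Q_ge0 m_min.
Qed.
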